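(* Let $i,j$ be positive integers and let $w,s\in\{0,1\}^*$ be $\frac{7}{3}$-power-free words such that $|w|=2^{i+1}-1$ or $|w|=3\cdot 2^i-1$, and $|s|=2^{j+1}-1$ or $|s|=3\cdot 2^j-1$. Assume also that $|s|\geq|w|$. Let $a\in\{0,1\}$. Then the word $sawawas$ contains a $\frac{7}{3}$-power (i.e., is not $\frac{7}{3}$-power-free).
   Context: A word $w'$ is a subword of $w$ if $w=uw'v$ for some words $u,v$. For a rational $\alpha\ge 1$, an $\alpha$-power is a word of the form $x^nx'$ with $x$ a nonempty word, $x'$ a prefix of $x$, $n$ a nonnegative integer and $n+|x'|/|x|=\alpha$. A word is $\alpha$-power-free if none of its subwords is a $\beta$-power for any rational $\beta\geq\alpha$; otherwise it contains an $\alpha$-power. *)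

From mathcomp Require Import all_boot.
Set Implicit Arguments. Unset Strict Implicit. Unset Printing Implicit Defensive.

Definition subword (w' w : seq bool) : Prop :=
  exists u v, w = u ++ w' ++ v.

Definition wpow (x : seq bool) (n : nat) : seq bool := flatten (nseq n x).

(* y is a beta-power with beta = num/den (den > 0): y = x^n x', x nonempty,
   x' a prefix of x, and n + |x'|/|x| = num/den, i.e.
   den * (n*|x| + |x'|) = num * |x|. *)
Definition is_ratpower (num den : nat) (y : seq bool) : Prop :=
  exists (x x' : seq bool) (n : nat),
    0 < size x /\ prefix x' x /\ y = wpow x n ++ x' /\
    den * (n * size x + size x') = num * size x.

Definition contains_power (num den : nat) (w : seq bool) : Prop :=
  exists (y : seq bool) (p q : nat),
    subword y w /\ 0 < q /\ num * q <= p * den /\ is_ratpower p q y.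

Definition power_free (num den : nat) (w : seq bool) : Prop :=
  ~ contains_power num den w.

From mathcomp Require Import all_boot zify.
From Stdlib Require Import Classical.
Set Implicit Arguments. Unset Strict Implicit. Unset Printing Implicit Defensive.

(* The word s a w a w a s contains the overlap (aw)(aw)a of period p = |w| + 1,
   with at least p - 2 letters on each side.  For p <= 3 the overlap
   itself has exponent (2p+1)/p >= 7/3.  Otherwise, if a binary word z had no
   factor of exponent >= 7/3, it would avoid bbb, ababa and abbabba, which
   forces all its doubled letters bb (away from the ends) to start at
   positions of one parity.  The overlap contains a doubled letter and repeats
   it p positions later, so p is even, and around the overlap z is the image
   of a word x under the Thue-Morse morphism b -> b(~b).  The overlap descends
   to an overlap of period p/2 in x, framed in the same way, while a
   repetition in x lifts to one of the same exponent in z; induction on p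
   concludes. *)

Local Notation "z .[ k ]" := (nth false z k).

Definition periodic (P : nat) (y : seq bool) :=
  forall k, k + P < size y -> y.[k] = y.[k + P].

Definition periodic_window (z : seq bool) (i L P : nat) :=
  i + L <= size z /\ forall k, k + P < L -> z.[i + k] = z.[i + k + P].

Definition has_repetition (num den : nat) (z : seq bool) :=
  exists i L P, [/\ 0 < P, num * P <= den * L & periodic_window z i L P].

Lemma wpowSr (x : seq bool) n : wpow x n ++ x = wpow x n.+1.
Proof. by rewrite /wpow; elim: n => [|n IHn] /=; rewrite ?cats0 // -catA IHn. Qed.

Lemma periodic_nth_addM P y n k :
  periodic P y -> k + n * P < size y -> y.[k + n * P] = y.[k].
Proof.
move=> yP; elim: n => [|n IHn] lt_y; first by rewrite addn0.
rewrite mulSnr addnA -yP; last by rewrite -addnA -mulSnr.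
by apply: IHn; lia.
Qed.

Lemma periodic_drop P y n :
  periodic P y -> drop (n * P) y = take (size y - n * P) y.
Proof.
move=> yP; apply: (@eq_from_nth _ false) => [|k]; first by rewrite size_drop size_take_min; lia.
rewrite size_drop => lt_k.
by rewrite nth_drop nth_take // addnC periodic_nth_addM //; lia.
Qed.

Lemma periodic_take_wpow P y n :
  periodic P y -> n * P <= size y -> take (n * P) y = wpow (take P y) n.
Proof.
move=> yP; elim: n => [|n IHn] le_y; first by rewrite take0.
rewrite mulSnr takeD IHn; last by lia.
by rewrite periodic_drop // take_takel ?wpowSr //; lia.
Qed.

Lemma periodic_is_ratpower P y :
  0 < P -> P <= size y -> periodic P y -> is_ratpower (size y) P y.
Proof.
move=> P_gt0 le_P yP.
move: (divn_eq (size y) P) (ltn_pmod (size y) P_gt0).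
move: (size y %/ P) (size y %% P) => n r size_y lt_r.
have size_x : size (take P y) = P by rewrite size_takel.
have le_nP : n * P <= size y by rewrite size_y leq_addr.
exists (take P y), (take r (take P y)), n.
split; first by rewrite size_x.
split; first exact: prefix_take.
split.
- rewrite -[LHS](cat_take_drop (n * P)) periodic_take_wpow ?periodic_drop //.
  by rewrite take_takel ?(ltnW lt_r) // size_y addKn.
- have size_x' : size (take r (take P y)) = r by rewrite size_takel // size_x (ltnW lt_r).
  by rewrite size_x size_x' -size_y mulnC.
Qed.

Lemma has_repetition_contains_power num den z :
  0 < den <= num -> has_repetition num den z -> contains_power num den z.
Proof.
move=> /andP[den_gt0 le_den] [i [L [P [P_gt0 le_num [le_z zP]]]]].
set y := take L (drop i z).
have size_y : size y = L by rewrite size_takel // size_drop; lia.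
have yP : periodic P y.
  move=> k; rewrite size_y => lt_k.
  by rewrite !nth_take ?nth_drop ?addnA ?zP //; lia.
exists y, L, P; split.
  by exists (take i z), (drop L (drop i z)); rewrite !cat_take_drop.
split=> //; split; first by rewrite [L * _]mulnC.
rewrite -size_y; apply: periodic_is_ratpower => //; rewrite size_y.
by rewrite -(leq_pmul2l den_gt0) (leq_trans _ le_num) // leq_mul2r le_den orbT.
Qed.

Definition decimate (z : seq bool) (S N : nat) := mkseq (fun t => z.[S + t.*2]) N.

Lemma has_repetition_decimate num den z S N :
  S + N.*2 <= size z ->
  (forall t, t < N -> z.[S + t.*2 + 1] = ~~ z.[S + t.*2]) ->
  has_repetition num den (decimate z S N) -> has_repetition num den z.
Proof.
move=> le_z zN [i [L [P [P_gt0 le_num [le_x xP]]]]].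
rewrite size_mkseq in le_x.
have zE t (b : bool) : t < N -> z.[S + t.*2 + b] = b (+) (decimate z S N).[t].
  by move=> lt_t; rewrite nth_mkseq //; case: b; rewrite ?addn0 ?zN.
exists (S + i.*2), L.*2, P.*2; split.
- by rewrite double_gt0.
- by rewrite -!muln2 !mulnA leq_mul2r le_num orbT.
split; first lia.
move=> k lt_k; have k_split := odd_double_half k.
rewrite (_ : S + i.*2 + k = S + (i + k./2).*2 + odd k); last lia.
rewrite (_ : S + (i + k./2).*2 + odd k + P.*2 = S + (i + k./2 + P).*2 + odd k); last lia.
by rewrite !zE ?xP //; lia.
Qed.

Definition doubled (z : seq bool) (k : nat) := z.[k] == z.[k.+1].

Lemma doubledPn z k : reflect (z.[k.+1] = ~~ z.[k]) (~~ doubled z k).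
Proof. by rewrite /doubled; case: z.[k]; case: z.[k.+1]; constructor. Qed.

Definition overlap_at (z : seq bool) (A p : nat) :=
  forall k, k <= p -> z.[A + k] = z.[A + p + k].

Definition framed_overlap (z : seq bool) (A p : nat) :=
  [/\ p - 2 <= A, A + (2 * p + 1) + (p - 2) <= size z & overlap_at z A p].

Lemma overlap_at_window z A p :
  overlap_at z A p -> A + (2 * p + 1) <= size z -> periodic_window z A (2 * p + 1) p.
Proof. by move=> ov le_z; split=> // k lt_k; rewrite addnAC ov //; lia. Qed.

Lemma overlap_at_pred z B p :
  ~~ doubled z B -> ~~ doubled z (B + p) -> overlap_at z B.+1 p -> overlap_at z B p.
Proof.
move=> /doubledPn nB /doubledPn nBp ov [_|k le_k]; last by rewrite !addnS -!addSn (ov k (ltnW le_k)).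
have := ov 0 (leq0n p); rewrite !addn0 addSn nB nBp.
by move/negb_inj.
Qed.

Ltac case_letters :=
  repeat match goal with |- context [nth false ?z ?k] => case: (nth false z k) end.

Section RepetitionFree.

Variable z : seq bool.
Hypothesis z_free : ~ has_repetition 7 3 z.

Lemma no_cube i : i.+2 < size z -> doubled z i -> ~~ doubled z i.+1.
Proof.
move=> lt_i d0; apply/negP => d1; apply: z_free.
exists i, 3, 1; split=> //; split=> [|k lt_k]; first lia.
move: d0 d1; rewrite /doubled.
by case: k lt_k => [|[|k]] lt_k; rewrite ?addnS ?addn0; try lia; case_letters.
Qed.

Lemma doubled_in_four i : i + 4 < size z -> exists2 h, h < 4 & doubled z (i + h).
Proof.
move=> lt_i; have [/hasP[h]|/hasPn no_dbl] := boolP (has (fun h => doubled z (i + h)) (iota 0 4)).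
  by rewrite mem_iota; exists h.
case: z_free; exists i, 5, 2; split=> //; split=> [|k lt_k]; first lia.
move: (no_dbl 0 isT) (no_dbl 1 isT) (no_dbl 2 isT) (no_dbl 3 isT); rewrite /doubled.
by case: k lt_k => [|[|[|k]]] lt_k; rewrite ?addnS ?addn0; try lia; case_letters.
Qed.

Lemma doubled_gap_three c : c.+4.+2 < size z ->
  doubled z c.+1 -> ~~ doubled z c.+2 -> ~~ doubled z c.+3 -> ~~ doubled z c.+4.
Proof.
move=> lt_c d1 n2 n3; apply/negP => d4.
have n0 : ~~ doubled z c by apply: contraL d1; apply: no_cube; lia.
have n5 : ~~ doubled z c.+4.+1 by apply: no_cube d4; lia.
apply: z_free; exists c, 7, 3; split=> //; split=> [|k lt_k]; first lia.
move: n0 d1 n2 n3 d4 n5; rewrite /doubled.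
by case: k lt_k => [|[|[|[|k]]]] lt_k; rewrite ?addnS ?addn0; try lia; case_letters.
Qed.

Lemma consecutive_doubled_gap_even d g : 0 < d -> d + g + 2 < size z ->
  doubled z d -> doubled z (d + g) -> (forall h, 0 < h < g -> ~~ doubled z (d + h)) ->
  ~~ odd g.
Proof.
move=> d_gt0 lt_z dd dg between; apply/negP => odd_g.
have [g1|[g3|g5]] : g = 1 \/ g = 3 \/ 5 <= g.
  by move: odd_g; case: g {lt_z dg between} => [|[|[|[|[|g]]]]] // _; lia.
- by subst g; move: dg; rewrite addn1 (negbTE (no_cube _ dd)) //; lia.
- subst g; case: d d_gt0 lt_z dd dg between => // c _ lt_z dd dg between.
  move: dg (between 1 isT) (between 2 isT); rewrite !addnS !addn0 => dg n2 n3.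
  have n4 : ~~ doubled z c.+4 by apply: doubled_gap_three dd n2 n3; lia.
  by rewrite dg in n4.
- have [h lt_h dh] := doubled_in_four (i := d + 1) ltac:(lia).
  suff : ~~ doubled z (d + 1 + h) by rewrite dh.
  by rewrite -addnA; apply: between; lia.
Qed.

Lemma doubled_gap_even d g : 0 < d -> d + g + 2 < size z ->
  doubled z d -> doubled z (d + g) -> ~~ odd g.
Proof.
elim/ltn_ind: g d => g IH d d_gt0 lt_z dd dg.
have [-> //|g_gt0] := posnP g.
have ex_dbl : exists h, (0 < h) && doubled z (d + h) by exists g; rewrite g_gt0.
case: (ex_minnP ex_dbl) => h /andP[h_gt0 dh] h_min.
have le_hg : h <= g by apply: h_min; rewrite g_gt0.
have even_h : ~~ odd h.
  apply: consecutive_doubled_gap_even d_gt0 _ dd dh _; first lia.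
  move=> h' /andP[h'_gt0 lt_h']; apply/negP => dh'.
  by have := h_min h'; rewrite h'_gt0 dh' => /(_ isT); lia.
rewrite -(subnKC le_hg) oddD (negbTE even_h) /=.
apply: (IH _ _ (d + h)) => //; last by rewrite -addnA subnKC.
all: lia.
Qed.

Lemma doubled_odd_eq d e : 0 < d -> 0 < e -> d + 2 < size z -> e + 2 < size z ->
  doubled z d -> doubled z e -> odd d = odd e.
Proof.
wlog le_de : d e / d <= e.
  move=> wlog_de d_gt0 e_gt0 lt_d lt_e dd de.
  by case: (leqP d e) => [|/ltnW] le; [|symmetry]; apply: wlog_de.
move=> d_gt0 _ _ lt_e dd de.
have even_gap : ~~ odd (e - d) by apply: (doubled_gap_even d_gt0); rewrite ?subnKC //; lia.
by rewrite -(subnKC le_de) oddD (negbTE even_gap) addbF.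
Qed.

Lemma framed_overlap_period_even A p : 4 <= p -> framed_overlap z A p -> ~~ odd p.
Proof.
move=> ge4_p [le_A le_z ov].
have [h lt_h dh] := doubled_in_four (i := A) ltac:(lia).
have dhp : doubled z (A + h + p).
  by rewrite /doubled addnAC -addnS -!ov; [rewrite addnS | lia | lia].
by apply: (doubled_gap_even _ _ dh dhp); lia.
Qed.

Lemma framed_overlap_descent A q : 2 <= q -> framed_overlap z A q.*2 ->
  exists2 x, framed_overlap x (q - 2) q & ~ has_repetition 7 3 x.
Proof.
move=> ge2_q [le_A le_z ov].
have [h lt_h dh] := doubled_in_four (i := A) ltac:(lia).
have undoubled k : 0 < k -> k + 2 < size z -> odd k != odd (A + h) -> ~~ doubled z k.
  by move=> k_gt0 lt_k; apply: contra => dk; apply/eqP; apply: doubled_odd_eq => //; lia.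
set r := odd (A + h) in undoubled.
have [B [le_B odd_B ovB]] : exists B, [/\ B <= A <= B.+1, odd B != r & overlap_at z B q.*2].
  have [odd_A|/negPn/eqP odd_A] := boolP (odd A != r); first by exists A; rewrite leqnn leqnSn.
  have def_A : A = A.-1.+1 by lia.
  have odd_pA : odd A.-1 != r by rewrite -odd_A def_A /=; case: odd.
  exists A.-1; split; [lia | done |].
  apply: overlap_at_pred; rewrite -?def_A //; apply: undoubled;
    rewrite ?oddD ?odd_double ?addbF //; lia.
(* S has the parity of B, and letter q - 2 + k of the decimation is z.[B + 2k]. *)
set S := B - (q - 2).*2.
have odd_S t : odd (S + t.*2) = odd B by rewrite oddD odd_double addbF oddB ?odd_double ?addbF //; lia.
exists (decimate z S (4 * q - 3)).
  split; [done | by rewrite size_mkseq; lia | move=> k le_k].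
  rewrite !nth_mkseq; try lia.
  rewrite (_ : S + (q - 2 + k).*2 = B + k.*2); last lia.
  by rewrite (_ : S + (q - 2 + q + k).*2 = B + q.*2 + k.*2) ?ovB //; lia.
move=> rep_x; apply: z_free; apply: has_repetition_decimate rep_x; first lia.
move=> t lt_t; rewrite addn1; apply/doubledPn; apply: undoubled; rewrite ?odd_S //; lia.
Qed.

End RepetitionFree.

Theorem framed_overlap_has_repetition z A p :
  0 < p -> framed_overlap z A p -> has_repetition 7 3 z.
Proof.
elim/ltn_ind: p z A => p IH z A p_gt0 zov.
have [le_p3|gt_p3] := leqP p 3.
  case: zov => _ le_z ov; exists A, (2 * p + 1), p; split=> //; first lia.
  by apply: overlap_at_window => //; lia.
have [//|z_free] := classic (has_repetition 7 3 z).
have even_p := framed_overlap_period_even z_free gt_p3 zov.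
rewrite -(even_halfK even_p) in zov.
have ge2_q : 2 <= p./2 by lia.
have [x xov x_free] := framed_overlap_descent z_free ge2_q zov.
by case: x_free; apply: IH xov; lia.
Qed.

Lemma overlap_at_cat s u t :
  t.[0] = u.[0] -> overlap_at (s ++ u ++ u ++ t) (size s) (size u).
Proof.
move=> tu k le_k; rewrite -addnA -!nth_drop !drop_size_cat //.
have [lt_k|ge_k] := ltnP k (size u); first by rewrite !nth_cat lt_k.
have -> : k = size u by apply/eqP; rewrite eqn_leq le_k.
rewrite -[size u in LHS]addn0 -!nth_drop !drop_size_cat //.
by rewrite [RHS]nth_cat ltnn subnn; case: u tu {le_k ge_k} => [|b u] //= ->.
Qed.

Theorem lemma7 (i j : nat) (w s : seq bool) (a : bool) :
  0 < i -> 0 < j ->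
  power_free 7 3 w -> power_free 7 3 s ->
  (size w = 2 ^ i.+1 - 1 \/ size w = 3 * 2 ^ i - 1) ->
  (size s = 2 ^ j.+1 - 1 \/ size s = 3 * 2 ^ j - 1) ->
  size w <= size s ->
  contains_power 7 3 (s ++ [:: a] ++ w ++ [:: a] ++ w ++ [:: a] ++ s).
Proof.
move=> _ _ _ _ _ _ le_ws.
apply: has_repetition_contains_power => //.
apply: (@framed_overlap_has_repetition _ (size s) (size (a :: w))) => //.
split; [rewrite /=; lia | rewrite !size_cat /=; lia | exact: overlap_at_cat].
Qed.
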